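(* For $n\ge0$ let $A_n=\sum_{r=0}^n n!/r!$ (so $A_n/n!=\sum_{r=0}^n 1/r!$), let $d_n=\gcd(A_n,n!)$, let $N_n=A_n/d_n$ be the numerator of $\sum_{r=0}^n1/r!$ in lowest terms, and let $R_n=\gcd(N_n,N_{n+2})$. Let $$P^{\ast}=\{p \text{ prime} : 0!-1!+2!-3!+\cdots+(-1)^{p-1}(p-1)!\equiv 0 \pmod p\}.$$ Then the terms of the sequence $R_0,R_1,\dots$ are ones and all the primes of $P^\ast$. More precisely: $R_1=2$; for every odd $p\in P^{\ast}$, $R_{p-3}=p$; and $R_n=1$ for all other $n\ge 0$. *)

From mathcomp Require Import all_boot all_order all_algebra.
Set Implicit Arguments. Unset Strict Implicit. Unset Printing Implicit Defensive.
Import GRing.Theory Num.Theory.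

(* A_n = sum_{r=0}^n n!/r!  (each n!/r! is an exact integer for r <= n) *)
Definition A (n : nat) : nat := \sum_(r < n.+1) n`! %/ r`!.
Definition d (n : nat) : nat := gcdn (A n) n`!.
(* N_n = A_n / d_n : numerator of sum_{r<=n} 1/r! in lowest terms *)
Definition N (n : nat) : nat := A n %/ d n.
Definition R (n : nat) : nat := gcdn (N n) (N n.+2).

Definition altfact (p : nat) : int :=
  (\sum_(k < p) (-1) ^+ k * (k`!)%:Z)%R.

Definition inPstar (p : nat) : Prop := prime p /\ (p%:Z %| altfact p)%Z.

From mathcomp Require Import all_boot all_order all_algebra.
From mathcomp Require Import ring zify.
Import GRing.Theory.

(* With [S_n = A_n / n! = N_n / M_n] in lowest terms, [S_(n+2) - S_n = (n+3) / (n+2)!]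
   shows that [R_n] divides [n+3]. If [n+3] divides [(n+2)!], clearing denominators
   in that identity makes every common divisor of [N_n] and [N_(n+2)] divide
   [M_n M_(n+2)], to which it is coprime, so [R_n = 1]; this covers every composite
   [n+3] except [4]. For a prime [p = n+3], [R_n] is [p] or [1] according as [p]
   divides [A_n], and [A_n] is congruent mod [p] to half the alternating factorial
   sum of [p]. *)

Lemma dvdn_fact_fact m n : m <= n -> m`! %| n`!.
Proof. by move=> /fact_split ->; apply: dvdn_mulr. Qed.

Lemma dvdn_mul_fact a b m : 0 < a -> a < b -> b <= m -> a * b %| m`!.
Proof.
move=> a_gt0 lt_ab le_bm; apply: (@dvdn_trans b`!); last exact: dvdn_fact_fact.
case: b lt_ab le_bm => // b lt_ab _.
by rewrite factS mulnC dvdn_mul // dvdn_fact // a_gt0 -ltnS.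
Qed.

Lemma dvdn_pred_fact_composite k :
  1 < k -> ~~ prime k -> k != 4 -> k %| k.-1`!.
Proof.
move=> k_gt1 k_nprime k_neq4.
have a_prime := pdiv_prime k_gt1; have a_gt1 := prime_gt1 a_prime.
have kE : k = pdiv k * (k %/ pdiv k) by rewrite mulnC divnK // pdiv_dvd.
set a := pdiv k in a_prime a_gt1 kE; set b := k %/ a in kE.
have b_gt1 : 1 < b.
  by case: b kE => [|[|b]] // kE; [lia | move: k_nprime; rewrite kE muln1 a_prime].
case: (ltngtP a b) => [lt_ab | lt_ba | eq_ab].
- by rewrite {1}kE; apply: dvdn_mul_fact; nia.
- by rewrite {1}kE mulnC; apply: dvdn_mul_fact; nia.
- (* [k = a^2] with [a > 2], and [a < 2a < k] are distinct factors of [(k-1)!]. *)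
  rewrite -eq_ab in kE.
  have a_gt2 : 2 < a.
    by rewrite ltnNge; apply: contra k_neq4 => le_a2; rewrite kE (_ : a = 2) //; lia.
  apply: (@dvdn_trans (a * (2 * a))); first by rewrite {1}kE dvdn_mul // dvdn_mull.
  by apply: dvdn_mul_fact; nia.
Qed.

Lemma A_succ n : A n.+1 = n.+1 * A n + 1.
Proof.
rewrite /A big_ord_recr /= divnn fact_gt0 big_distrr /=; congr (_ + _).
apply: eq_bigr => i _; rewrite factS muln_divA //.
by apply: dvdn_fact_fact; rewrite -ltnS.
Qed.

Lemma A0 : A 0 = 1.
Proof. by rewrite /A big_ord1. Qed.

Lemma A_gt0 n : 0 < A n.
Proof. by case: n => [|n]; rewrite ?A0 // A_succ addn1. Qed.

Lemma A_succ2 n : A n.+2 = n.+2 * n.+1 * A n + n.+3.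
Proof. by rewrite !A_succ; ring. Qed.

Lemma altfactS m : altfact m.+1 = (altfact m + (-1) ^+ m * (m`!)%:Z)%R.
Proof. by rewrite /altfact big_ord_recr. Qed.

(* Unfolding [A_(i+1) = (i+1) A_i + 1] while [i + 1 = -(j + 1)] mod [m + 1]. *)
Lemma A_unfold_mod m i j : i + j = m ->
  ((m.+1)%:Z %| ((A m)%:Z - (altfact j + (-1) ^+ j * (j`!)%:Z * (A i)%:Z))%R)%Z.
Proof.
elim: j i => [|j IHj] i ij_m.
  by rewrite addn0 in ij_m; rewrite ij_m /altfact big_ord0 fact0 !mul1r add0r subrr.
have /IHj : i.+1 + j = m by lia.
have -> : ((A i.+1)%:Z = (i.+1)%:Z * (A i)%:Z + 1)%R by rewrite A_succ PoszD PoszM.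
have -> : ((m.+1)%:Z = (i.+1)%:Z + (j.+1)%:Z)%R by rewrite -PoszD; congr Posz; lia.
set d := ((i.+1)%:Z + (j.+1)%:Z)%R => d_dvd.
have -> : ((A m)%:Z - (altfact j.+1 + (-1) ^+ j.+1 * (j.+1)`!%:Z * (A i)%:Z))%R =
   ((A m)%:Z - (altfact j + (-1) ^+ j * (j`!)%:Z * ((i.+1)%:Z * (A i)%:Z + 1))
     + (-1) ^+ j * (j`!)%:Z * (A i)%:Z * d)%R.
  by rewrite altfactS factS PoszM exprS /d; ring.
by rewrite rpredD // dvdz_mull.
Qed.

Lemma A_mod_altfact m : ((A m)%:Z = altfact m.+1 %[mod m.+1])%Z.
Proof.
apply/eqP; rewrite eqz_mod_dvd altfactS.
by have := @A_unfold_mod m 0 m (add0n m); rewrite A0 mulr1.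
Qed.

Lemma dvdn_A_altfact n :
  odd n.+3 -> (n.+3 %| A n) = ((n.+3)%:Z %| altfact n.+3)%Z.
Proof.
move=> n3_odd.
have -> : ((n.+3)%:Z %| altfact n.+3)%Z = ((n.+3)%:Z %| (A n.+2)%:Z)%Z.
  by apply/dvdz_mod0P/dvdz_mod0P; rewrite A_mod_altfact.
have -> : A n.+2 = 2 * A n + n.+3 * (n * A n + 1) by rewrite A_succ2; ring.
by rewrite dvdzE /= dvdn_addl ?(dvdn_mulr _ (dvdnn _)) // Gauss_dvdr // coprimen2.
Qed.

Definition M n := n`! %/ d n.

Lemma d_gt0 n : 0 < d n.
Proof. by rewrite gcdn_gt0 A_gt0. Qed.

Lemma N_mul_d n : N n * d n = A n.
Proof. by rewrite divnK // dvdn_gcdl. Qed.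

Lemma M_mul_d n : M n * d n = n`!.
Proof. by rewrite divnK // dvdn_gcdr. Qed.

Lemma coprime_N_M n : coprime (N n) (M n).
Proof.
rewrite /coprime -(eqn_pmul2r (d_gt0 n)) muln_gcdl N_mul_d M_mul_d.
by rewrite mul1n.
Qed.

Lemma R_dvd_N n : R n %| N n. Proof. exact: dvdn_gcdl. Qed.
Lemma R_dvd_N2 n : R n %| N n.+2. Proof. exact: dvdn_gcdr. Qed.

Lemma R_dvd_n3 n : R n %| n.+3.
Proof.
have R_dvd_A k : R n %| N k -> R n %| A k by move=> ?; rewrite -N_mul_d dvdn_mulr.
have := R_dvd_A _ (R_dvd_N2 n).
by rewrite A_succ2 dvdn_addr // dvdn_mull // R_dvd_A // R_dvd_N.
Qed.

(* [N_(n+2) / M_(n+2) - N_n / M_n = (n+3) / (n+2)!], with denominators cleared. *)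
Lemma N_cross n :
  N n.+2 * M n * n.+2`! = N n * M n.+2 * n.+2`! + n.+3 * M n * M n.+2.
Proof.
have dd_gt0 : 0 < d n * d n.+2 by rewrite muln_gt0 !d_gt0.
apply/eqP; rewrite -(eqn_pmul2r dd_gt0); apply/eqP.
have M2 : M n.+2 * d n.+2 = n.+2 * n.+1 * (M n * d n) by rewrite !M_mul_d !factS mulnA.
have N2 : N n.+2 * d n.+2 = n.+2 * n.+1 * (N n * d n) + n.+3 by rewrite !N_mul_d A_succ2.
transitivity (N n.+2 * d n.+2 * (M n * d n) * n.+2`!); first ring.
rewrite [RHS](_ : _ = N n * d n * (M n.+2 * d n.+2) * n.+2`!
                      + n.+3 * (M n * d n) * (M n.+2 * d n.+2)); last ring.
by rewrite N2 M2 !factS -(M_mul_d n); ring.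
Qed.

Lemma R_eq1_of_dvdn_fact n : n.+3 %| n.+2`! -> R n = 1.
Proof.
case/dvdnP=> t fact_eq.
have cross : N n.+2 * M n * t = N n * M n.+2 * t + M n * M n.+2.
  apply/eqP; rewrite -(eqn_pmul2r (ltn0Sn n.+2)); apply/eqP.
  transitivity (N n.+2 * M n * n.+2`!); first by rewrite fact_eq; ring.
  by rewrite N_cross fact_eq; ring.
have R_dvd_MM : R n %| M n * M n.+2.
  have := dvdn_mulr t (dvdn_mulr (M n) (R_dvd_N2 n)).
  by rewrite cross dvdn_addr // -mulnA dvdn_mulr // R_dvd_N.
have : coprime (R n) (M n * M n.+2).
  by rewrite coprimeMr !(coprime_dvdl _ (coprime_N_M _)) ?R_dvd_N ?R_dvd_N2.
by rewrite /coprime (gcdn_idPl R_dvd_MM) => /eqP.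
Qed.

Lemma coprime_prime_fact p m : prime p -> m < p -> coprime p m`!.
Proof.
move=> p_prime; elim: m => [|m IHm] lt_mp; first by rewrite coprimen1.
rewrite factS coprimeMr IHm 1?ltnW // andbT prime_coprime //.
by apply/negP => /(dvdn_leq (ltn0Sn m)); lia.
Qed.

Lemma R_prime n : prime n.+3 -> R n = if n.+3 %| A n then n.+3 else 1.
Proof.
move=> p_prime.
have p_dvd_N k : k <= n.+2 -> (n.+3 %| N k) = (n.+3 %| A k).
  move=> le_k; rewrite -N_mul_d Gauss_dvdl // (coprime_dvdr (dvdn_gcdr _ _)) //.
  by rewrite coprime_prime_fact // ltnS.
case: ifP => [pA | pNA].
  apply/eqP; rewrite eqn_dvd R_dvd_n3 dvdn_gcd !p_dvd_N ?leqnn ?leqW //.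
  by rewrite pA A_succ2 dvdn_add // dvdn_mull.
case/primeP: p_prime => _ /(_ _ (R_dvd_n3 n)) /orP[/eqP // | /eqP R_eq].
by rewrite -(p_dvd_N n (leqW (leqnSn n))) -R_eq R_dvd_N in pNA.
Qed.

Theorem theorem5p1 :
  R 1 = 2 /\
  (forall p : nat, inPstar p -> odd p -> R (p - 3) = p) /\
  (forall n : nat, n <> 1 ->
     (forall p : nat, inPstar p -> odd p -> n <> p - 3) -> R n = 1).
Proof.
split; first by rewrite /R /N /d !A_succ A0.
split.
  move=> [|[|[|n]]] [p_prime p_dvd] p_odd //.
  by rewrite !subSS subn0 R_prime // dvdn_A_altfact // p_dvd.
move=> n n_neq1 not_Pstar.
case p_prime: (prime n.+3).
  have p_odd : odd n.+3 by case: (even_prime p_prime) => [//|].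
  rewrite R_prime //; case: ifP => // pA; exfalso.
  by apply: (not_Pstar n.+3 _ p_odd); [split; rewrite -?dvdn_A_altfact | rewrite !subSS subn0].
apply: R_eq1_of_dvdn_fact; apply: (@dvdn_pred_fact_composite n.+3); rewrite ?p_prime //.
by apply/eqP; lia.
Qed.
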